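(* Let $x\in\mathbb{R}^d$, $d\ge1$, and run the following procedure. Compute $(\theta,p)=\mathrm{csa}_{\text{even}}(x)$. If $\theta^\top\Pi_{[0,1]^d}(x)\le p$, stop. Otherwise set $R:=\{1,\dots,d\}$, $q:=p$ and repeat the following loop: if $|R|=1$, stop; compute $v_R := x_R - \frac{\theta_R^\top x_R - q}{|R|}\theta_R$; let $S := \{j\in R : (v_j>1 \text{ and } \theta_j=1) \text{ or } (v_j<0\text{ and }\theta_j=-1)\}$; if $S=\emptyset$, stop; otherwise replace $q$ by $q - |\{j\in S:\theta_j=1\}|$ and $R$ by $R\setminus S$, and repeat. Then at the beginning of every execution of the loop, $\theta_R^\top \Pi_{[0,1]^{R}}(x_R) > q$ holds (i.e. the check $\theta^\top\Pi_{[0,1]}(\cdot)\le p$ is never satisfied in the recursive part and is only needed at the start).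
   Context: For $R\subseteq\{1,\dots,d\}$ and $u\in\mathbb{R}^d$, $u_R$ denotes the subvector $(u_j)_{j\in R}$; $\Pi_{[0,1]^R}$ is componentwise clipping to $[0,1]$. $\mathrm{csa}_{\text{even}}(x)$: set $\theta_j=1$ if $x_j>1/2$ and $\theta_j=-1$ otherwise; if $|\{j:\theta_j=1\}|$ is even, choose $j^*\in\arg\min_j|x_j-1/2|$ and replace $\theta_{j^*}$ by $-\theta_{j^*}$; set $p=|\{j:\theta_j=1\}|-1$; output $(\theta,p)$. *)

From HB Require Import structures.
From mathcomp Require Import all_boot all_order all_algebra.
Set Implicit Arguments. Unset Strict Implicit. Unset Printing Implicit Defensive.
Import Order.TTheory GRing.Theory Num.Theory.
Local Open Scope ring_scope.

Section Defs.
Variables (R : realFieldType) (d : nat).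

Definition clip01 (t : R) : R := Num.min 1 (Num.max 0 t).

Definition dot_clip (A : {set 'I_d}) (theta x : 'I_d -> R) : R :=
  \sum_(j in A) theta j * clip01 (x j).

(* csa_even(x) = (theta, p), as a relation: the choice of
   j* in argmin_j |x_j - 1/2| is arbitrary (any minimiser allowed). *)
Definition csa_even (x : 'I_d -> R) (theta : 'I_d -> R) (p : R) : Prop :=
  exists theta0 : 'I_d -> R,
    (forall j, theta0 j = (if 1/2 < x j then 1 else -1)) /\
    (if ~~ odd #|[set j | theta0 j == 1]|
     then exists jstar : 'I_d,
            (forall j, `|x jstar - 1/2| <= `|x j - 1/2|) /\
            (forall j, theta j = (if j == jstar then - theta0 j else theta0 j))
     else forall j, theta j = theta0 j) /\
    p = (#|[set j | theta j == 1]|)%:R - 1.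

Definition vR (A : {set 'I_d}) (q : R) (theta x : 'I_d -> R) (j : 'I_d) : R :=
  x j - ((\sum_(i in A) theta i * x i) - q) / (#|A|)%:R * theta j.

Definition Sset (A : {set 'I_d}) (q : R) (theta x : 'I_d -> R) : {set 'I_d} :=
  [set j in A | ((1 < vR A q theta x j) && (theta j == 1))
             || ((vR A q theta x j < 0) && (theta j == -1))].

(* States (R, q) at the beginning of some execution of the loop. *)
Inductive loop_reach (p : R) (theta x : 'I_d -> R) : {set 'I_d} -> R -> Prop :=
| reach_init : loop_reach p theta x [set: 'I_d] p
| reach_step A q :
    loop_reach p theta x A q ->
    #|A| != 1%N ->
    Sset A q theta x != set0 ->
    loop_reach p theta x (A :\: Sset A q theta x)
      (q - (#|[set j in Sset A q theta x | theta j == 1]|)%:R).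

End Defs.

(* Each pass of the loop removes a set S of coordinates on which θ = ±1, and
   θ_j clip(x_j) is at most 1 where θ_j = 1 and at most 0 where θ_j = -1.
   Hence θ_S^T clip(x_S) ≤ |{j ∈ S : θ_j = 1}|, which is exactly the amount
   subtracted from q, so the strict inequality θ_R^T clip(x_R) > q, true at the
   start, survives every pass. *)
From HB Require Import structures.
From mathcomp Require Import all_boot all_order all_algebra.
From mathcomp Require Import lra.
Import Order.TTheory GRing.Theory Num.Theory.
Local Open Scope ring_scope.

Lemma clip01_ge0 (R : realFieldType) (t : R) : 0 <= clip01 t.
Proof. by rewrite /clip01 le_min ler01 le_max lexx. Qed.

Lemma clip01_le1 (R : realFieldType) (t : R) : clip01 t <= 1.
Proof. by rewrite /clip01 ge_min lexx. Qed.

Lemma sign_mul_unit_le (R : realFieldType) (s t : R) :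
  (s == 1) || (s == -1) -> 0 <= t <= 1 -> s * t <= (s == 1)%:R.
Proof.
move=> /orP[] /eqP-> /andP[t_ge0 t_le1]; first by rewrite eqxx mul1r.
by rewrite mulN1r (le_trans _ (ler0n _ _)) // oppr_le0.
Qed.

Lemma dot_clip_setID {R : realFieldType} {d : nat} {A B : {set 'I_d}}
    (theta x : 'I_d -> R) :
  B \subset A -> dot_clip A theta x = dot_clip B theta x + dot_clip (A :\: B) theta x.
Proof. by move=> sBA; rewrite /dot_clip (big_setID B) /= (setIidPr sBA). Qed.

Lemma dot_clip_le_card_pos {R : realFieldType} {d : nat} {B : {set 'I_d}}
    {theta : 'I_d -> R} (x : 'I_d -> R) :
  {in B, forall j, (theta j == 1) || (theta j == -1)} ->
  dot_clip B theta x <= #|[set j in B | theta j == 1]|%:R.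
Proof.
move=> sign_theta.
have -> : #|[set j in B | theta j == 1]|%:R = \sum_(j in B) (theta j == 1)%:R :> R.
  rewrite -sum1_card natr_sum big_mkcond [RHS]big_mkcond /=.
  by apply: eq_bigr => j _; rewrite inE; case: (j \in B); case: (_ == 1).
apply: ler_sum => j jB; apply: sign_mul_unit_le; first exact: sign_theta.
by rewrite clip01_ge0 clip01_le1.
Qed.

Section Loop.
Variables (R : realFieldType) (d : nat) (A : {set 'I_d}) (q : R) (theta x : 'I_d -> R).

Lemma Sset_sub : Sset A q theta x \subset A.
Proof. by apply/subsetP => j; rewrite inE => /andP[]. Qed.

Lemma Sset_sign :
  {in Sset A q theta x, forall j, (theta j == 1) || (theta j == -1)}.
Proof. by move=> j; rewrite inE => /andP[_ /orP[] /andP[_ ->]]; rewrite ?orbT. Qed.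

Lemma dot_clip_Sset_step :
  q < dot_clip A theta x ->
  q - #|[set j in Sset A q theta x | theta j == 1]|%:R
    < dot_clip (A :\: Sset A q theta x) theta x.
Proof.
rewrite (dot_clip_setID theta x Sset_sub).
have := dot_clip_le_card_pos x Sset_sign; lra.
Qed.

End Loop.

Theorem theorem7 (R : realFieldType) (d : nat) (x theta : 'I_d -> R) (p : R) :
  (0 < d)%N ->
  csa_even x theta p ->
  ~ (dot_clip [set: 'I_d] theta x <= p) ->
  forall (A : {set 'I_d}) (q : R),
    loop_reach p theta x A q ->
    q < dot_clip A theta x.
Proof.
move=> _ _ start_fails A q; elim=> [|A' q' _ IH _ _].
  by rewrite ltNge; apply/negP.
exact: dot_clip_Sset_step IH.
Qed.
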